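(* Let $q\in\mathbb{C}\setminus\{0\}$, $\hat E_q(x)=\sum_{m\ge0}(-1)^mq^{m(m-1)/2}x^m$, and for $k\ge1$ let $P_k=\sum_{j=0}^{k-1}q^{j(j-1)/2}(-x)^j$. For every integer $n\ge2$, $$(x\sigma_q+1)\frac{1}{P_{n-1}}(x^2\sigma_q-1)\frac{1}{P_{n-2}}(x^3\sigma_q+1)\cdots\frac{1}{P_1}\left(x^n\sigma_q-(-1)^n\right)\hat E_q(x)^n=(-1)^{n(n-1)/2}P_n,$$ where the operator on the left is the composition, from left to right, of $\left(x\sigma_q+1\right)$ followed, for $i=2,\dots,n$, by $\frac{1}{P_{n+1-i}}\left(x^{i}\sigma_q-(-1)^{i}\right)$ (note $P_1=1$).
   Context: $\sigma_qf(x)=f(qx)$ acting on the field $\mathbb{C}[x^{-1}][[x]]$ of formal Laurent series; field elements act as multiplication operators and products of operators denote composition. *)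

(* Formal power series over a numeric closed field C
   (e.g. the complex numbers), represented by coefficient functions nat -> C. *)
From mathcomp Require Import all_boot all_order all_algebra.
Set Implicit Arguments. Unset Strict Implicit. Unset Printing Implicit Defensive.
Import Order.TTheory GRing.Theory Num.Theory.
Local Open Scope ring_scope.

Section PS.
Variable C : numClosedFieldType.

Definition ps := nat -> C.

Definition ps_one : ps := fun m => (m == 0)%:R.
Definition ps_add (f g : ps) : ps := fun m => f m + g m.
Definition ps_scale (c : C) (f : ps) : ps := fun m => c * f m.
Definition ps_mul (f g : ps) : ps :=
  fun m => \sum_(i < m.+1) f i * g (m - i)%N.
Fixpoint ps_pow (f : ps) (n : nat) : ps :=
  match n with 0 => ps_one | n'.+1 => ps_mul f (ps_pow f n') end.

Definition ps_xpow (i : nat) (f : ps) : ps :=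
  fun m => if (i <= m)%N then f (m - i)%N else 0.

(* sigma_q f (x) = f (q x) *)
Definition sigma_q (q : C) (f : ps) : ps := fun m => q ^+ m * f m.

Fixpoint inv_seq (f : ps) (n : nat) : seq C :=
  match n with
  | 0 => [:: (f 0%N)^-1]
  | n'.+1 => let s := inv_seq f n' in
      rcons s (- (f 0%N)^-1 * \sum_(i < n) f i.+1 * nth 0 s (n' - i)%N)
  end.
Definition ps_inv (f : ps) : ps := fun n => nth 0 (inv_seq f n) n.

Definition Ehat (q : C) : ps := fun m => (-1) ^+ m * q ^+ (m * m.-1)./2.

Definition Pk (q : C) (k : nat) : ps :=
  fun j => if (j < k)%N then q ^+ (j * j.-1)./2 * (-1) ^+ j else 0.

Definition factor (q : C) (n i : nat) (g : ps) : ps :=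
  if i == 1%N then ps_add (ps_xpow 1 (sigma_q q g)) g
  else ps_mul (ps_inv (Pk q (n + 1 - i)))
              (ps_add (ps_xpow i (sigma_q q g)) (ps_scale (- (-1) ^+ i) g)).

(* composition factor 1 o factor 2 o ... o factor n applied to g *)
Definition big_operator (q : C) (n : nat) (g : ps) : ps :=
  foldr (factor q n) g (iota 1 n).

End PS.

(* Work in the ring C[[x]] of formal power series (the coefficient functions
   ps C, made into a commutative ring whose product laws are inherited from
   polynomial truncations), on which sigma_q is a ring endomorphism.  Write
   T_k = \hat E_q - P_k for the tails of \hat E_q; the single computation
   driving everything is  x sigma_q T_k = - T_{k+1}.
   Let h_i(a_1, ..., a_k) be the complete homogeneous symmetric functions.
   Since x^i sigma_q h_i(T_0, ..., T_k) = h_i(x sigma_q T_0, ..., x sigma_q T_k)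
   = (-1)^i h_i(T_1, ..., T_{k+1}), the divided-difference identity
   h_{i+1}(a, X) - h_{i+1}(b, X) = (a - b) h_i(a, b, X) with a - b = -P_{k+1}
   shows that (x^{i+1} sigma_q - (-1)^{i+1}) h_{i+1}(T_0..T_k) is, up to sign,
   P_{k+1} h_i(T_0..T_{k+1}).  Starting from \hat E_q^n = h_n(T_0), each factor
   of the operator thus lowers the degree of h by one and adds one variable,
   the division by P_{n+1-i} exactly cancelling the P produced; the last
   factor leaves \pm P_n h_0 = \pm P_n. *)

From HB Require Import structures.
From mathcomp Require Import all_boot all_order all_algebra.
From mathcomp Require Import boolp ring zify.
Set Implicit Arguments. Unset Strict Implicit. Unset Printing Implicit Defensive.
Import Order.TTheory GRing.Theory Num.Theory.
Local Open Scope ring_scope.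

HB.instance Definition _ (C : numClosedFieldType) :=
  Choice.copy (ps C) (nat -> C).

Section PowerSeriesRing.
Variable C : numClosedFieldType.
Implicit Types f g h : ps C.

Definition ps_zero : ps C := fun _ => 0.
Definition ps_opp f : ps C := fun m => - f m.

Lemma ps_addA : associative (@ps_add C).
Proof. by move=> f g h; apply: funext => m; exact: addrA. Qed.

Lemma ps_addC : commutative (@ps_add C).
Proof. by move=> f g; apply: funext => m; exact: addrC. Qed.

Lemma ps_add0 : left_id ps_zero (@ps_add C).
Proof. by move=> f; apply: funext => m; exact: add0r. Qed.

Lemma ps_addN : left_inverse ps_zero ps_opp (@ps_add C).
Proof. by move=> f; apply: funext => m; exact: addNr. Qed.

(* The truncation of f at order N, as a polynomial; the Cauchy product of
   series agrees with the polynomial product up to order N, so the ring laws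
   of the product are inherited from {poly C}. *)
Definition trunc (N : nat) f : {poly C} := \poly_(i < N.+1) f i.

Lemma coef_trunc N f i : (i <= N)%N -> (trunc N f)`_i = f i.
Proof. by move=> le_iN; rewrite coef_poly ltnS le_iN. Qed.

Lemma ps_mul_trunc N f g j :
  (j <= N)%N -> ps_mul f g j = (trunc N f * trunc N g)`_j.
Proof.
move=> le_jN; rewrite coefM; apply: eq_bigr => i _.
have le_ij : (i <= j)%N by rewrite -ltnS.
by rewrite !coef_trunc ?(leq_trans le_ij) ?(leq_trans (leq_subr i j)).
Qed.

Lemma ps_mulA : associative (@ps_mul C).
Proof.
move=> f g h; apply: funext => m.
rewrite !(ps_mul_trunc _ _ (leqnn m)).
transitivity ((trunc m f * (trunc m g * trunc m h))`_m).
  rewrite !coefM; apply: eq_bigr => j _.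
  rewrite [(trunc m (ps_mul g h))`_ _]coef_trunc ?leq_subr //.
  by rewrite (ps_mul_trunc _ _ (leq_subr j m)).
rewrite mulrA !coefM; apply: eq_bigr => -[j /= lt_jm] _.
have le_jm : (j <= m)%N by rewrite -ltnS.
by rewrite [(trunc m (ps_mul f g))`_ _]coef_trunc // (ps_mul_trunc _ _ le_jm).
Qed.

Lemma ps_mulC : commutative (@ps_mul C).
Proof.
by move=> f g; apply: funext => m;
   rewrite !(ps_mul_trunc _ _ (leqnn m)) mulrC.
Qed.

Lemma ps_mul1 : left_id (@ps_one C) (@ps_mul C).
Proof.
move=> f; apply: funext => m.
rewrite /ps_mul big_ord_recl /ps_one /= mul1r subn0 big1 ?addr0 // => i _.
by rewrite mul0r.
Qed.

Lemma ps_mulDl : left_distributive (@ps_mul C) (@ps_add C).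
Proof.
move=> f g h; apply: funext => m.
by rewrite /ps_mul /ps_add -big_split; apply: eq_bigr => i _; rewrite mulrDl.
Qed.

Lemma ps_one_neq0 : ps_one C != ps_zero.
Proof. by apply/eqP => /(congr1 (fun f => f 0%N)) /eqP; rewrite oner_eq0. Qed.

End PowerSeriesRing.

HB.instance Definition _ (C : numClosedFieldType) :=
  GRing.isZmodule.Build (ps C)
    (@ps_addA C) (@ps_addC C) (@ps_add0 C) (@ps_addN C).
HB.instance Definition _ (C : numClosedFieldType) :=
  GRing.Zmodule_isComNzRing.Build (ps C)
    (@ps_mulA C) (@ps_mulC C) (@ps_mul1 C) (@ps_mulDl C) (@ps_one_neq0 C).

Section Coefficients.
Variable C : numClosedFieldType.
Implicit Types f g : ps C.

Lemma psN f m : (- f) m = - f m. Proof. by []. Qed.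
Lemma psB f g m : (f - g) m = f m - g m. Proof. by []. Qed.
Lemma ps1 m : (1 : ps C) m = (m == 0)%:R. Proof. by []. Qed.
Lemma psM f g m : (f * g) m = \sum_(i < m.+1) f i * g (m - i)%N.
Proof. by []. Qed.

End Coefficients.

Section SigmaMorphism.
Variables (C : numClosedFieldType) (q : C).

Lemma sigma_q_is_zmod_morphism : zmod_morphism (sigma_q q).
Proof. by move=> f g; apply: funext => m; rewrite /sigma_q !psB mulrBr. Qed.

Lemma sigma_q_is_monoid_morphism : monoid_morphism (sigma_q q).
Proof.
split; first by apply: funext => -[|m]; rewrite /sigma_q !ps1 ?mulr1 ?mulr0.
move=> f g; apply: funext => m; rewrite /sigma_q !psM mulr_sumr.
apply: eq_bigr => -[i /= lt_im] _.
have le_im : (i <= m)%N by rewrite -ltnS.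
by rewrite -{1}(subnKC le_im) exprD mulrACA.
Qed.

HB.instance Definition _ :=
  GRing.isZmodMorphism.Build (ps C) (ps C) (sigma_q q)
    sigma_q_is_zmod_morphism.
HB.instance Definition _ :=
  GRing.isMonoidMorphism.Build (ps C) (ps C) (sigma_q q)
    sigma_q_is_monoid_morphism.

End SigmaMorphism.

(* The complete homogeneous symmetric functions h_i(a_1, ..., a_k), given by
   h_i(a :: X) = a * h_{i-1}(a :: X) + h_i(X) and h_i([::]) = [i == 0];
   hcons a h is the sequence h_i(a :: X) built from h = (h_i(X))_i. *)
Section CompleteHomogeneous.
Variable R : comNzRingType.
Implicit Types (a b c : R) (h : nat -> R) (X : seq R).

Fixpoint hcons a h (i : nat) : R :=
  if i is i'.+1 then a * hcons a h i' + h i else 1.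
Arguments hcons : simpl never.

Definition hs X : nat -> R := foldr hcons (fun i => (i == 0)%:R) X.

Lemma hcons0 a h : hcons a h 0 = 1. Proof. by []. Qed.
Lemma hconsS a h i : hcons a h i.+1 = a * hcons a h i + h i.+1.
Proof. by []. Qed.
Lemma hs_nil i : hs [::] i = (i == 0)%:R. Proof. by []. Qed.
Lemma hs_cons a X : hs (a :: X) = hcons a (hs X). Proof. by []. Qed.

Lemma hs0 X : hs X 0 = 1.
Proof. by case: X. Qed.

Lemma hs1 a i : hs [:: a] i = a ^+ i.
Proof.
elim: i => [|i IH] //.
by rewrite hs_cons hconsS -hs_cons IH hs_nil addr0 exprS.
Qed.

Lemma hcons_delta a b h i :
  hcons a h i.+1 - hcons b h i.+1 = (a - b) * hcons a (hcons b h) i.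
Proof.
elim: i => [|i IH]; first by rewrite !hconsS !hcons0; ring.
rewrite (hconsS a h i.+1) (hconsS b h i.+1) (hconsS a (hcons b h) i).
transitivity (a * (hcons a h i.+1 - hcons b h i.+1) + (a - b) * hcons b h i.+1).
  by ring.
by rewrite IH; ring.
Qed.

Lemma hcons_swap a b h : hcons a (hcons b h) = hcons b (hcons a h).
Proof.
apply: funext; elim=> [|i IH] //.
rewrite (hconsS a (hcons b h)) (hconsS b (hcons a h)).
have D := hcons_delta a b h i; rewrite IH in D.
by rewrite -[hcons a h i.+1](subrK (hcons b h i.+1)) D IH; ring.
Qed.

Lemma hs_rcons X b : hs (rcons X b) = hs (b :: X).
Proof.
by elim: X => [|c X IH] //; rewrite rcons_cons !hs_cons IH hcons_swap.
Qed.

Lemma hs_scale c X i : hs [seq c * a | a <- X] i = c ^+ i * hs X i.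
Proof.
elim: X i => [|a X IHX] i.
  by case: i => [|i]; rewrite !hs_nil ?mulr1 ?mulr0.
rewrite map_cons !hs_cons; elim: i => [|i IHi]; first by rewrite !hcons0 mulr1.
rewrite !hconsS IHi -!hs_cons IHX exprS; ring.
Qed.

End CompleteHomogeneous.

Lemma hs_rmorph (R S : comNzRingType) (f : {rmorphism R -> S}) X i :
  f (hs X i) = hs (map f X) i.
Proof.
elim: X i => [|a X IHX] i.
  by case: i => [|i]; rewrite !hs_nil ?rmorph1 ?rmorph0.
rewrite map_cons !hs_cons.
elim: i => [|i IHi]; first by rewrite !hcons0 rmorph1.
by rewrite !hconsS rmorphD rmorphM IHi -!hs_cons IHX.
Qed.

Section SeriesOperations.
Variable C : numClosedFieldType.
Local Notation PS := (ps C).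
Implicit Types (f g : PS) (i e : nat).

Definition ps_x : PS := fun m => (m == 1)%N%:R.

Lemma ps_xpowE i f : ps_xpow i f = ps_x ^+ i * f.
Proof.
elim: i => [|i IH].
  by rewrite expr0 mul1r; apply: funext => m; rewrite /ps_xpow subn0.
rewrite exprS -mulrA -IH; apply: funext => -[|m]; rewrite psM.
  by rewrite big_ord1 /ps_x mul0r.
rewrite big_ord_recl big_ord_recl big1 => [|j _]; last by rewrite /ps_x mul0r.
by rewrite /ps_x /= mul0r mul1r add0r addr0 /ps_xpow ltnS subSS subn1.
Qed.

Lemma ps_scaleN1 e f : ps_scale ((-1) ^+ e) f = (-1) ^+ e * f.
Proof.
elim: e => [|e IH].
  by rewrite !expr0 mul1r; apply: funext => m; exact: mul1r.
have scaleN c : ps_scale (- c) f = - ps_scale c f.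
  by apply: funext => m; rewrite psN /ps_scale mulNr.
by rewrite !exprS !mulN1r scaleN IH mulNr.
Qed.

Lemma size_inv_seq f n : size (inv_seq f n) = n.+1.
Proof. by elim: n => [|n IH] //=; rewrite size_rcons IH. Qed.

Lemma nth_inv_seq f n j : (j <= n)%N -> nth 0 (inv_seq f n) j = ps_inv f j.
Proof.
elim: n => [|n IH]; first by rewrite leqn0 => /eqP ->.
rewrite leq_eqVlt => /orP[/eqP -> //| lt_jn].
by rewrite /= nth_rcons size_inv_seq lt_jn IH.
Qed.

Lemma ps_invS f n :
  ps_inv f n.+1 = - (f 0%N)^-1 * \sum_(i < n.+1) f i.+1 * ps_inv f (n - i)%N.
Proof.
rewrite {1}/ps_inv /= nth_rcons size_inv_seq ltnn eqxx.
by congr (_ * _); apply: eq_bigr => i _; rewrite nth_inv_seq ?leq_subr.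
Qed.

Lemma ps_invK f : f 0%N != 0 -> ps_inv f * f = 1.
Proof.
move=> f0_neq0; rewrite mulrC; apply: funext => -[|m]; rewrite psM ps1.
  by rewrite big_ord1 /ps_inv /= mulfV.
by rewrite big_ord_recl subn0 ps_invS mulrA mulrN mulfV // mulN1r addNr.
Qed.
End SeriesOperations.

Section Tails.
Variables (C : numClosedFieldType) (q : C).
Local Notation PS := (ps C).
Implicit Types (g : PS) (k i e : nat).

(* The tail T_k = \hat E_q - P_k: the terms of degree >= k of \hat E_q. *)
Definition tail k : PS := Ehat q - Pk q k.

Definition tails k : seq PS := map tail (iota 0 k.+1).

Lemma tail0 : tail 0 = Ehat q.
Proof. by rewrite /tail (_ : Pk q 0 = 0) ?subr0 //; apply: funext. Qed.

Lemma tailS_sub_tail0 k : tail k.+1 - tail 0 = - Pk q k.+1.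
Proof. by rewrite tail0 /tail addrAC subrr add0r. Qed.

Lemma Pk0_neq0 k : Pk q k.+1 0%N != 0.
Proof. by rewrite /Pk /= mul1r oner_eq0. Qed.

Lemma tail_shift k : ps_x C * sigma_q q (tail k) = - tail k.+1.
Proof.
rewrite -[ps_x C]expr1 -ps_xpowE; apply: funext => -[|m].
all: rewrite /tail psN psB /Ehat /Pk.
  by rewrite /ps_xpow /= mulrC subrr oppr0.
rewrite /ps_xpow /sigma_q psB /= subSS subn0 ltnS -!bin2 binS bin1 exprD exprS.
by case: (m < k)%N; ring.
Qed.

Definition qshift i g : PS := ps_x C ^+ i * sigma_q q g - (-1) ^+ i * g.

Lemma qshift_sign i e g : qshift i ((-1) ^+ e * g) = (-1) ^+ e * qshift i g.
Proof. by rewrite /qshift rmorphM rmorph_sign; ring. Qed.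

(* Indeed x sigma_q shifts
   T_j to -T_{j+1}, and the difference of the two resulting h_{i+1} is a
   divided difference in the variables T_{k+1}, T_0, and T_{k+1} - T_0
   = -P_{k+1}. *)
Lemma qshift_tails k i :
  qshift i.+1 (hs (tails k) i.+1) = (-1) ^+ i * Pk q k.+1 * hs (tails k.+1) i.
Proof.
set M := map tail (iota 1 k).
have iota_rcons : iota 1 k.+1 = rcons (iota 1 k) k.+1.
  by rewrite -[k.+1]addn1 iotaD -cats1 add1n addn1.
have shifted : [seq ps_x C * a | a <- map (sigma_q q) (tails k)]
               = [seq -1 * a | a <- rcons M (tail k.+1)].
  rewrite -map_rcons -iota_rcons (iotaDl 1 0) -!map_comp.
  by apply: eq_map => j /=; rewrite tail_shift mulN1r add1n.
have tailsS : hs (tails k.+1) = hcons (tail k.+1) (hcons (tail 0) (hs M)).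
  rewrite /tails -[iota 0 k.+2]/(0 :: iota 1 k.+1)%N iota_rcons.
  rewrite map_cons map_rcons.
  by rewrite !hs_cons hs_rcons hs_cons hcons_swap.
rewrite /qshift hs_rmorph -hs_scale shifted hs_scale hs_rcons tailsS /=.
rewrite -mulrBr hcons_delta tailS_sub_tail0 exprS; ring.
Qed.
End Tails.

Section Operator.
Variables (C : numClosedFieldType) (q : C) (n : nat).
Local Notation PS := (ps C).
Implicit Types (g : PS) (k i : nat).

Lemma factor1 g : factor q n 1 g = qshift q 1 g.
Proof. by rewrite /factor eqxx /qshift ps_xpowE expr1 mulN1r opprK. Qed.

Lemma factorE i g :
  i != 1%N -> factor q n i g = ps_inv (Pk q (n + 1 - i)) * qshift q i g.
Proof.
move=> /negbTE i_neq1.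
by rewrite /factor i_neq1 ps_xpowE -mulN1r -exprS ps_scaleN1 exprS mulN1r mulNr.
Qed.

Lemma Ehat_pow m : ps_pow (Ehat q) m = Ehat q ^+ m.
Proof. by elim: m => [|m IH] //=; rewrite exprS -IH. Qed.

Lemma signrDD (R : pzRingType) a : (-1) ^+ a * (-1) ^+ a = 1 :> R.
Proof. by rewrite -expr2 sqrr_sign. Qed.

(* Applying the last k factors (those of index n-k+1, ..., n) to \hat E_q^n
   gives, up to sign, h_{n-k}(T_0, ..., T_k). *)
Lemma partial_operator k : (k < n)%N ->
  foldr (factor q n) (ps_pow (Ehat q) n) (iota (n - k).+1 k)
  = (-1) ^+ ('C(n, 2) + 'C(n - k, 2)) * hs (tails q k) (n - k).
Proof.
elim: k => [|k IH] lt_kn.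
  rewrite subn0 -[tails q 0]/[:: tail q 0] hs1 tail0 Ehat_pow.
  by rewrite exprD signrDD mul1r.
have [i n_sub_k] : exists i, (n - k = i.+2)%N by exists (n - k - 2)%N; lia.
rewrite (_ : n - k.+1 = i.+1)%N; last by lia.
rewrite n_sub_k in IH; set E := ps_pow (Ehat q) n in IH *.
rewrite -[foldr _ E _]/(factor q n i.+2 (foldr (factor q n) E (iota i.+3 k))).
rewrite IH; last exact: ltnW.
rewrite factorE; last by [].
rewrite (_ : n + 1 - i.+2 = k.+1)%N; last by lia.
rewrite qshift_sign qshift_tails binS bin1 addnA exprD.
set s := (-1) ^+ _; set t := (-1) ^+ _; set P := Pk q _; set H := hs _ _.
have -> : ps_inv P * (s * t * (t * P * H)) = s * H * (t * t) * (ps_inv P * P).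
  by ring.
by rewrite signrDD ps_invK ?Pk0_neq0 // !mulr1.
Qed.
End Operator.

Theorem mainTheorem9 (C : numClosedFieldType) (q : C) (hq : q != 0)
  (n : nat) (hn : (2 <= n)%N) :
  big_operator q n (ps_pow (Ehat q) n)
  = ps_scale ((-1) ^+ (n * n.-1)./2) (Pk q n).
Proof.
case: n hn => [//|m] _.
have := partial_operator q (ltnSn m); rewrite subSnn => partial.
rewrite /big_operator -[iota 1 m.+1]/(1 :: iota 2 m)%N [foldr _ _ _]/= partial.
rewrite factor1 qshift_sign qshift_tails hs0 mulr1 mul1r.
by rewrite bin2 addn0 ps_scaleN1.
Qed.
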